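(* Let $q\ge2$ and let $f$ be a $(q^2-1,1)$-coloring of $H(q+1,q)$ whose color-$1$ class is a $1$-perfect code and whose color-$2$ class can be partitioned into lines. Then for every positive integer $p$ and every $t\in\{0,\dots,p-1\}$ there exists a $\big((q^2-1)(p-t),\ (q^2-1)t+p\big)$-coloring of $H(q+1,pq)$; its main eigenvalue is $q(p-1)-1$.
   Context: The Hamming graph $H(n,q)$ has vertex set $\mathbb{Z}_q^n$, two vertices adjacent iff they differ in exactly one coordinate. A line ($1$-face) is a set of $q$ vertices obtained by fixing all coordinates but one. A $(b,c)$-coloring of $H(n,q)$ is a surjective map onto $\{1,2\}$ in which each color-1 vertex has exactly $b$ neighbours of color 2 and each color-2 vertex has exactly $c$ neighbours of color 1; its main eigenvalue is $n(q-1)-(b+c)$. A $1$-perfect code is a set $C$ of vertices such that every radius-$1$ Hamming ball contains exactly one element of $C$. *)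

From mathcomp Require Import all_boot all_order all_algebra.
Set Implicit Arguments. Unset Strict Implicit. Unset Printing Implicit Defensive.

Notation hvert n q := {ffun 'I_n -> 'I_q}.

Definition hdist n q (x y : hvert n q) : nat := #|[set i | x i != y i]|.

Definition hadj n q (x y : hvert n q) : bool := hdist x y == 1.

Definition color1 := true.
Definition color2 := false.

Definition is_bc_coloring n q (f : hvert n q -> bool) (b c : nat) : Prop :=
  [/\ (exists x, f x = color1), (exists x, f x = color2),
      (forall x, f x = color1 -> #|[set y | hadj x y & f y == color2]| = b)
    & (forall x, f x = color2 -> #|[set y | hadj x y & f y == color1]| = c)].

Definition main_eigenvalue (n q b c : nat) : int :=
  (n%:Z * (q%:Z - 1) - (b%:Z + c%:Z))%R.

Definition ball1 n q (x : hvert n q) : {set hvert n q} :=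
  [set y | hdist x y <= 1].

Definition perfect_code1 n q (C : {set hvert n q}) : Prop :=
  forall x : hvert n q, #|ball1 x :&: C| = 1.

Definition hline n q (i : 'I_n) (x : hvert n q) : {set hvert n q} :=
  [set y : hvert n q | [forall j, (j != i) ==> (y j == x j)]].

Definition is_line n q (L : {set hvert n q}) : Prop :=
  exists i x, L = hline i x.

Definition line_partitionable n q (S : {set hvert n q}) : Prop :=
  exists P : {set {set hvert n q}},
    partition P S /\ forall L, L \in P -> is_line L.

Definition color_class n q (f : hvert n q -> bool) (col : bool)
  : {set hvert n q} := [set x | f x == col].

(* Write a symbol v of Z_(pq) as the digit pair (v mod q, v div q) and project
   H(q+1,pq) onto H(q+1,q) through the low digits.  A vertex y gets colour 1 when
   its projection x is in the code; otherwise x lies on a line of the partition,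
   of direction i, and y gets colour 1 iff the sum of the high digits of y outside
   coordinate i is < t modulo p.  Moving along direction i keeps the colour; changing
   another coordinate to a given low digit and letting its high digit run through
   Z_p shifts that sum through all residues (t choices of colour 1, p - t of colour
   2), except for the unique code neighbour of x, whose p lifts all have colour 1.
   Counting neighbours coordinate by coordinate yields the parameters. *)

From mathcomp Require Import all_boot all_order all_algebra.
From mathcomp Require Import zify.
Set Implicit Arguments. Unset Strict Implicit. Unset Printing Implicit Defensive.

Section HammingNeighbours.
Variables n m : nat.
Implicit Types y z : hvert n m.

Definition upd y (j : 'I_n) (v : 'I_m) : hvert n m :=
  [ffun k => if k == j then v else y k].

Lemma upd_eq y j v : upd y j v j = v.
Proof. by rewrite ffunE eqxx. Qed.

Lemma upd_neq y j v k : k != j -> upd y j v k = y k.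
Proof. by rewrite ffunE => /negbTE ->. Qed.

Lemma upd_id y j : upd y j (y j) = y.
Proof. by apply/ffunP => k; rewrite ffunE; case: eqP => // ->. Qed.

Lemma upd_inj y j : injective (upd y j).
Proof. by move=> v w /(congr1 (fun z : hvert n m => z j)); rewrite !upd_eq. Qed.

Lemma hadj_upd y j v : v != y j -> hadj y (upd y j v).
Proof.
move=> vy; rewrite /hadj /hdist -(cards1 j); apply/eqP/eq_card => k; rewrite !inE.
by case: (eqVneq k j) => [->|kj]; rewrite ?upd_eq 1?eq_sym ?vy // upd_neq ?eqxx.
Qed.

Lemma hadj_upd_eq y z j : hadj y z -> z j != y j -> z = upd y j (z j).
Proof.
rewrite /hadj /hdist => /cards1P [k yzk] zj.
have diff i : z i != y i -> i = k.
  by move=> zi; apply/set1P; rewrite -yzk inE eq_sym.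
apply/ffunP => i; rewrite ffunE; case: (eqVneq i j) => [->//|ij].
by apply/eqP; apply: contraNT ij => /diff ->; rewrite (diff _ zj).
Qed.

Lemma card_hadj y (P : pred (hvert n m)) :
  #|[set z | hadj y z & P z]| =
  \sum_(j < n) #|[set v | (v != y j) && P (upd y j v)]|.
Proof.
have hadj_sum z : hadj y z -> \sum_(j < n) (z j != y j : nat) = 1.
  rewrite /hadj /hdist => /eqP <-; rewrite -sum1_card [RHS]big_mkcond /=.
  by apply: eq_bigr => j _; rewrite inE eq_sym; case: (_ != _).
rewrite -sum1_card.
transitivity (\sum_(z in [set z | hadj y z & P z]) \sum_(j < n) (z j != y j : nat)).
  by apply: eq_bigr => z; rewrite inE => /andP [/hadj_sum ->].
rewrite exchange_big /=; apply: eq_bigr => j _.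
rewrite -big_mkcondr /= sum1_card -(card_imset _ (@upd_inj y j)).
apply: eq_card => z; rewrite unfold_in /= !inE; apply/idP/imsetP.
  case/andP=> /andP [yz Pz] zj; exists (z j); last exact: hadj_upd_eq.
  by rewrite inE zj -(hadj_upd_eq yz zj).
case=> v; rewrite inE => /andP [vy Pv] ->.
by rewrite hadj_upd // Pv upd_eq vy.
Qed.

Lemma hadj_full_degree y (P : pred (hvert n m)) :
  #|[set z | hadj y z & P z]| = n * (m - 1) -> forall z, hadj y z -> P z.
Proof.
move=> full z yz; apply: contraT => Pz.
have : [set z | hadj y z & P z] \proper [set z | hadj y z & true].
  apply/properP; split; last by exists z; rewrite !inE ?yz ?(negbTE Pz).
  by apply/subsetP => z'; rewrite !inE => /andP [->].
move/proper_card; rewrite full card_hadj (eq_bigr (fun=> m - 1)) => [|j _].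
  by rewrite sum_nat_const card_ord ltnn.
by rewrite subn1 -[in RHS](card_ord m) -(cardC1 (y j)); apply: eq_card => v; rewrite !inE andbT.
Qed.

End HammingNeighbours.

Lemma bc_coloring_full_nbr n m (f : hvert n m -> bool) c :
  is_bc_coloring f (n * (m - 1)) c -> forall x z, f x -> hadj x z -> f z = false.
Proof.
case=> _ _ code _ x z fx xz; apply/eqP.
by apply: (hadj_full_degree (P := fun z => f z == color2)) xz; rewrite code.
Qed.

Lemma bc_coloring_col2_nbr n m (f : hvert n m -> bool) b c :
  is_bc_coloring f b c -> forall x, f x = false -> #|[set z | hadj x z & f z]| = c.
Proof.
by case=> _ _ _ col2 x fx; rewrite -(col2 x fx); apply: eq_card => z; rewrite !inE eqb_id.
Qed.

Section Digits.
Variables p q : nat.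

Lemma digit_join_lt (r : 'I_q) (d : 'I_p) : d * q + r < p * q.
Proof. by have := ltn_ord r; have := ltn_ord d; nia. Qed.

Definition digit_join (r : 'I_q) (d : 'I_p) : 'I_(p * q) := Ordinal (digit_join_lt r d).

Hypothesis q_gt0 : 0 < q.

Definition digit_mod (v : 'I_(p * q)) : 'I_q := Ordinal (ltn_pmod v q_gt0).

Lemma digit_div_lt (v : 'I_(p * q)) : v %/ q < p.
Proof. by rewrite ltn_divLR. Qed.

Definition digit_div (v : 'I_(p * q)) : 'I_p := Ordinal (digit_div_lt v).

Lemma digit_mod_join r d : digit_mod (digit_join r d) = r.
Proof. by apply: val_inj; rewrite /= modnMDl modn_small. Qed.

Lemma digit_div_join r (d : 'I_p) : digit_join r d %/ q = d.
Proof. by rewrite /= divnMDl // divn_small // addn0. Qed.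

Lemma digit_splitK v : digit_join (digit_mod v) (digit_div v) = v.
Proof. by apply: val_inj; rewrite /= -divn_eq. Qed.

Lemma digit_join_inj r : injective (digit_join r).
Proof.
by move=> d d' /(congr1 (fun v : 'I_(p * q) => v %/ q)); rewrite !digit_div_join => /val_inj.
Qed.

Lemma card_by_digit_mod (P : pred 'I_(p * q)) :
  #|[set v | P v]| = \sum_(r : 'I_q) #|[set d : 'I_p | P (digit_join r d)]|.
Proof.
rewrite -sum1_card (partition_big digit_mod xpredT) //=; apply: eq_bigr => r _.
rewrite -(card_imset _ (@digit_join_inj r)) -sum1_card; apply: eq_bigl => v.
rewrite !inE; apply/andP/imsetP => [[Pv /eqP vr]|[d]].
  by exists (digit_div v); rewrite ?inE -vr digit_splitK.
by rewrite inE => Pv ->; rewrite digit_mod_join.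
Qed.

End Digits.

Lemma card_ord_lt_eq p t (b : bool) : t <= p ->
  #|[set e : 'I_p | (e < t) == b]| = if b then t else p - t.
Proof.
move=> htp.
have card_lt : #|[set e : 'I_p | e < t]| = t.
  rewrite -sum1_card -[RHS]card_ord -sum1_card (big_ord_widen _ (fun=> 1) htp).
  by apply: eq_bigl => e; rewrite inE.
case: b.
  by rewrite -[in RHS]card_lt; apply: eq_card => e; rewrite !inE eqb_id.
have -> : [set e : 'I_p | (e < t) == false] = ~: [set e : 'I_p | e < t].
  by apply/setP => e; rewrite !inE eqbF_neg.
have := cardsC [set e : 'I_p | e < t]; rewrite card_lt card_ord; lia.
Qed.

Lemma card_mod_lt_eq p t c (b : bool) : t <= p ->
  #|[set d : 'I_p | ((c + d) %% p < t) == b]| = if b then t else p - t.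
Proof.
case: p => [|p] htp.
  rewrite leqn0 in htp; rewrite (eqP htp) sub0n if_same.
  by apply/eqP; rewrite cards_eq0; apply/eqP/setP => -[].
pose shift (d : 'I_p.+1) : 'I_p.+1 := Ordinal (ltn_pmod (c + d) (ltn0Sn p)).
have shift_inj : injective shift.
  move=> a a' /(congr1 val) /= /eqP; rewrite eqn_modDl !modn_small ?ltn_ord // => /eqP.
  exact: val_inj.
rewrite -(card_ord_lt_eq b htp) -[RHS](card_preimset _ shift_inj).
by apply: eq_card => d; rewrite !inE.
Qed.

Lemma card_mod_lt_eq_neq p t c (b : bool) (d0 : 'I_p) : t <= p ->
  ((c + d0) %% p < t) != b ->
  #|[set d : 'I_p | (d != d0) && (((c + d) %% p < t) == b)]| = if b then t else p - t.
Proof.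
move=> htp d0b; rewrite -(card_mod_lt_eq c b htp); apply: eq_card => d; rewrite !inE.
by case: (eqVneq d d0) => [->|]; rewrite ?(negbTE d0b).
Qed.

Lemma sum_if_card (T : finType) (A : pred T) (a k : nat) :
  \sum_(r : T) (if A r then a else k) =
  a * #|[set r | A r]| + k * (#|T| - #|[set r | A r]|).
Proof.
rewrite big_if /= !sum_nat_cond_const -(cardsC [set r | A r]) addKn.
have -> : [set r | ~~ A r] = ~: [set r | A r] by apply/setP => r; rewrite !inE.
by rewrite mulnC [k * _]mulnC.
Qed.

Lemma sum_affine_bounded (I : finType) (P : pred I) (F : I -> nat) a k m :
  (forall i, P i -> F i <= m) ->
  \sum_(i | P i) (a * F i + k * (m - F i)) =
  a * \sum_(i | P i) F i + k * (#|[set i | P i]| * m - \sum_(i | P i) F i).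
Proof.
by move=> Fm; rewrite big_split /= -!big_distrr /= sumnB // sum_nat_cond_const.
Qed.

Lemma line_partition_dir n q (S : {set hvert n.+1 q}) : line_partitionable S ->
  exists dir : hvert n.+1 q -> 'I_n.+1, forall x y : hvert n.+1 q, x \in S ->
    (forall k, k != dir x -> y k = x k) -> y \in S /\ dir y = dir x.
Proof.
case=> P [/and3P [/eqP coverP trivP _] lineP].
pose dir x := odflt ord0 [pick i | [exists z, pblock P x == hline i z]].
exists dir => x y xS yx.
have Bx : pblock P x \in P by apply: pblock_mem; rewrite coverP.
have [z Bz] : exists z, pblock P x = hline (dir x) z.
  rewrite /dir; case: pickP => [i /existsP [z /eqP ->]|none]; first by exists z.
  have [i [z Bz]] := lineP _ Bx.
  have : [exists z', pblock P x == hline i z'] by apply/existsP; exists z; rewrite Bz.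
  by rewrite none.
have yB : y \in pblock P x.
  have : x \in pblock P x by rewrite mem_pblock coverP.
  rewrite Bz !inE => /forallP xz; apply/forallP => k; apply/implyP => kx.
  by rewrite yx //; apply: (implyP (xz k)).
split; first by rewrite -coverP; apply/bigcupP; exists (pblock P x).
by rewrite /dir (def_pblock trivP Bx yB).
Qed.

Section Construction.
Variables (n q p t c : nat).
Hypotheses (q_gt0 : 0 < q) (t_le_p : t <= p).
Variables (f : hvert n.+1 q -> bool) (dir : hvert n.+1 q -> 'I_n.+1).
(* [dir x] is the direction of the partition line through a colour-2 vertex x. *)
Hypothesis dir_line : forall x y : hvert n.+1 q, f x = false ->
  (forall k, k != dir x -> y k = x k) -> f y = false /\ dir y = dir x.
Hypothesis code_nbr : forall x z, f x -> hadj x z -> f z = false.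
Hypothesis col2_nbr : forall x, f x = false -> #|[set z | hadj x z & f z]| = c.

Implicit Types (x : hvert n.+1 q) (y z : hvert n.+1 (p * q)).

Definition proj y : hvert n.+1 q := [ffun k => digit_mod q_gt0 (y k)].

Definition digit_sum (I : pred 'I_n.+1) y := \sum_(k | I k) (y k %/ q).

Definition lift_coloring y :=
  f (proj y) || (digit_sum (predC1 (dir (proj y))) y %% p < t).

Local Notation g := lift_coloring.

Lemma proj_upd y j r d : proj (upd y j (digit_join r d)) = upd (proj y) j r.
Proof.
apply/ffunP => k; rewrite !ffunE.
by case: (k == j); rewrite ?digit_mod_join.
Qed.

Lemma digit_sum_upd_out (I : pred 'I_n.+1) y j v :
  ~~ I j -> digit_sum I (upd y j v) = digit_sum I y.
Proof.
by move=> Ij; apply: eq_bigr => k Ik; rewrite upd_neq //; apply: contraNneq Ij => <-.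
Qed.

Lemma digit_sum_upd_in (I : pred 'I_n.+1) y j v : I j ->
  digit_sum I (upd y j v) = digit_sum (predD1 I j) y + v %/ q.
Proof.
move=> Ij; rewrite /digit_sum (bigD1 j) //= upd_eq addnC; congr (_ + _).
by apply: eq_big => [k | k /andP [_ kj]]; [rewrite /= andbC | rewrite upd_neq].
Qed.

Lemma dir_upd_neq x j r : f (upd x j r) = false -> f x || (j != dir x) ->
  j != dir (upd x j r).
Proof.
move=> fxr; apply: contraTneq => jd.
have [-> dx] : f x = false /\ dir x = dir (upd x j r).
  by apply: dir_line => // k; rewrite -jd => kj; rewrite upd_neq.
by rewrite dx -jd eqxx.
Qed.

Lemma lift_coloring_upd y j r d :
  f (upd (proj y) j r) = false -> j != dir (upd (proj y) j r) ->
  g (upd y j (digit_join r d)) =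
  ((digit_sum (predD1 (predC1 (dir (upd (proj y) j r))) j) y + d) %% p < t).
Proof.
by move=> fxr jd; rewrite /lift_coloring proj_upd fxr digit_sum_upd_in ?digit_div_join.
Qed.

Definition nbr_count y j r b :=
  #|[set d : 'I_p | (digit_join r d != y j) && (g (upd y j (digit_join r d)) == b)]|.

Lemma card_hadj_lift y b :
  #|[set z | hadj y z & g z == b]| = \sum_(j < n.+1) \sum_(r < q) nbr_count y j r b.
Proof.
rewrite (card_hadj y (fun z => g z == b)); apply: eq_bigr => j _.
exact: (card_by_digit_mod q_gt0 (fun v => (v != y j) && (g (upd y j v) == b))).
Qed.

Lemma digit_join_neq y j r d : r != proj y j -> digit_join r d != y j.
Proof. by apply: contra => /eqP e; rewrite ffunE -e digit_mod_join. Qed.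

Lemma nbr_count_off y j r (b : bool) :
  r != proj y j -> f (proj y) || (j != dir (proj y)) ->
  nbr_count y j r b =
  if f (upd (proj y) j r) then (if b then p else 0) else (if b then t else p - t).
Proof.
move=> rj jd; rewrite /nbr_count; case fxr: (f _).
  have gT d : g (upd y j (digit_join r d)) by rewrite /lift_coloring proj_upd fxr.
  case: b.
    by rewrite -[RHS](card_ord p); apply: eq_card => d; rewrite !inE digit_join_neq // gT.
  by apply/eqP; rewrite cards_eq0; apply/eqP/setP => d; rewrite !inE gT andbF.
rewrite -(card_mod_lt_eq (digit_sum (predD1 (predC1 (dir (upd (proj y) j r))) j) y) b t_le_p).
by apply: eq_card => d; rewrite !inE digit_join_neq // lift_coloring_upd // dir_upd_neq.
Qed.

Lemma nbr_count_same y j : f (proj y) = false -> j != dir (proj y) ->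
  nbr_count y j (proj y j) (~~ g y) = if g y then p - t else t.
Proof.
move=> fx jd; have xr : upd (proj y) j (proj y j) = proj y := upd_id _ _.
pose S := digit_sum (predD1 (predC1 (dir (proj y))) j) y.
have gE d : g (upd y j (digit_join (proj y j) d)) = ((S + d) %% p < t).
  by rewrite lift_coloring_upd ?xr.
have gy : g y = ((S + digit_div q_gt0 (y j)) %% p < t).
  by rewrite -gE ffunE digit_splitK upd_id.
rewrite -if_neg -(@card_mod_lt_eq_neq p t S (~~ g y) (digit_div q_gt0 (y j)) t_le_p); last first.
  by rewrite -gy; case: (g y).
apply: eq_card => d; rewrite !inE gE ffunE.
by rewrite -{2}(digit_splitK q_gt0 (y j)) (inj_eq (@digit_join_inj p q q_gt0 _)).
Qed.

Lemma nbr_count_dir y r : f (proj y) = false -> nbr_count y (dir (proj y)) r (~~ g y) = 0.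
Proof.
move=> fx; apply/eqP; rewrite cards_eq0; apply/eqP/setP => d; rewrite !inE.
set z := upd y _ _.
have [fz dz] : f (proj z) = false /\ dir (proj z) = dir (proj y).
  by apply: dir_line => // k kd; rewrite proj_upd upd_neq.
have -> : g z = g y by rewrite /lift_coloring fz fx dz digit_sum_upd_out //= eqxx.
by case: (g y); rewrite andbF.
Qed.

Lemma nbr_count_code_same y j : f (proj y) -> nbr_count y j (proj y j) false = 0.
Proof.
move=> fx; apply/eqP; rewrite cards_eq0; apply/eqP/setP => d.
by rewrite !inE /lift_coloring proj_upd upd_id fx andbF.
Qed.

Lemma card_hadj_lift_code y : f (proj y) ->
  #|[set z | hadj y z & g z == false]| = n.+1 * (q - 1) * (p - t).
Proof.
move=> fx; rewrite card_hadj_lift -mulnA -[in RHS](card_ord n.+1) -sum_nat_const.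
apply: eq_bigr => j _; rewrite (bigD1 (proj y j)) //= nbr_count_code_same // add0n.
rewrite (eq_bigr (fun=> p - t)) => [|r rj]; last first.
  by rewrite nbr_count_off ?fx // (code_nbr fx (hadj_upd rj)).
rewrite sum_nat_cond_const subn1 -[q in q.-1]card_ord -(cardsC1 (proj y j)).
by congr (_ * _); apply: eq_card => r; rewrite !inE.
Qed.

Lemma card_hadj_lift_col2 y : f (proj y) = false ->
  #|[set z | hadj y z & g z == ~~ g y]| =
  if g y then (n * q - c) * (p - t) else c * p + (n * q - c) * t.
Proof.
move=> fx; set x := proj y; set i := dir x.
pose N j := #|[set r | (r != x j) && f (upd x j r)]|.
have N_dir : N i = 0.
  apply/eqP; rewrite cards_eq0; apply/eqP/setP => r; rewrite !inE.
  have [-> _] : f (upd x i r) = false /\ _ := dir_line fx (fun k ki => upd_neq x r ki).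
  by rewrite andbF.
have N_sum : \sum_(j | j != i) N j = c.
  by rewrite -(col2_nbr fx) card_hadj [RHS](bigD1 i) //= -/(N i) N_dir.
rewrite card_hadj_lift (bigD1 i) //= big1 ?add0n => [|r _]; last exact: nbr_count_dir.
rewrite (eq_bigr (fun j => (if g y then 0 else p) * N j + (if g y then p - t else t) * (q - N j))).
  rewrite sum_affine_bounded => [|j _]; last by rewrite -[q in _ <= q]card_ord max_card.
  have card_i : #|[set j | j != i]| = n.
    rewrite -[RHS]/(n.+1.-1) -[in RHS](card_ord n.+1) -(cardsC1 i).
    by apply: eq_card => j; rewrite !inE.
  by rewrite N_sum card_i; case: (g y); rewrite ?mul0n ?add0n mulnC // [t * _]mulnC.
move=> j ji; rewrite -[X in _ * (X - N j)](card_ord q) -sum_if_card; apply: eq_bigr => r _.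
case: (eqVneq r (x j)) => [->|rj] /=; first by rewrite nbr_count_same.
by rewrite nbr_count_off ?ji ?orbT //; case: (f _); case: (g y).
Qed.

Lemma lift_coloring_bc : 1 < q -> n.+1 = q + c -> t < p -> (exists x, f x) ->
  is_bc_coloring g ((n * q - c) * (p - t)) (c * p + (n * q - c) * t).
Proof.
move=> q_gt1 nqc t_lt_p [x0 fx0].
have p_gt0 : 0 < p by apply: leq_ltn_trans t_lt_p.
have degree : n.+1 * (q - 1) = n * q - c by rewrite mulnBr muln1 mulSn nqc subnDl.
pose y0 : hvert n.+1 (p * q) := [ffun k => digit_join (x0 k) (Ordinal p_gt0)].
have proj_y0 : proj y0 = x0 by apply/ffunP => k; rewrite !ffunE digit_mod_join.
split.
- by exists y0; rewrite /lift_coloring proj_y0 fx0.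
- have : 0 < #|[set z | hadj y0 z & g z == false]|.
    by rewrite card_hadj_lift_code ?proj_y0 // degree; nia.
  by case/card_gt0P => z; rewrite inE => /andP [_ /eqP]; exists z.
- move=> y gy; case fy: (f (proj y)); first by rewrite card_hadj_lift_code // degree.
  by move: (card_hadj_lift_col2 fy); rewrite gy.
- move=> y gy; have fy : f (proj y) = false by move: gy; rewrite /lift_coloring; case: (f _).
  by move: (card_hadj_lift_col2 fy); rewrite gy.
Qed.

End Construction.

Theorem theorem8 (q : nat) (hq : 2 <= q) (f : hvert q.+1 q -> bool)
  (hf : is_bc_coloring f (q ^ 2 - 1) 1)
  (hcode : perfect_code1 (color_class f color1))
  (hlines : line_partitionable (color_class f color2)) :
  forall p t : nat, 0 < p -> t < p ->
    exists g : hvert q.+1 (p * q) -> bool,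
      is_bc_coloring g ((q ^ 2 - 1) * (p - t)) ((q ^ 2 - 1) * t + p) /\
      main_eigenvalue q.+1 (p * q) ((q ^ 2 - 1) * (p - t)) ((q ^ 2 - 1) * t + p)
        = ((q%:Z * (p%:Z - 1) - 1)%R).
Proof.
move=> p t _ t_lt_p.
have q_gt0 : 0 < q by apply: ltnW.
have [dir dir_S] := line_partition_dir hlines.
have dir_line (x y : hvert q.+1 q) : f x = false ->
    (forall k, k != dir x -> y k = x k) -> f y = false /\ dir y = dir x.
  by move=> fx /(dir_S x y); rewrite !inE fx => /(_ isT) [/eqP].
have degree : q ^ 2 - 1 = q.+1 * (q - 1) by rewrite -mulnn; nia.
have code_nbr : forall x z, f x -> hadj x z -> f z = false.
  by apply: (bc_coloring_full_nbr (c := 1)); rewrite -degree.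
have [[x0 fx0] _ _ _] := hf.
exists (lift_coloring t q_gt0 f dir); split.
  have := lift_coloring_bc q_gt0 (ltnW t_lt_p) dir_line code_nbr (bc_coloring_col2_nbr hf)
    hq (esym (addn1 q)) t_lt_p (ex_intro _ x0 fx0).
  by rewrite -mulnn mul1n addnC.
rewrite /main_eigenvalue -PoszD.
have -> : ((q ^ 2 - 1) * (p - t) + ((q ^ 2 - 1) * t + p) = p * q * q)%N.
  by rewrite -mulnn; nia.
by rewrite !PoszM; nia.
Qed.
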